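(* Let $A\in\mathbb{R}^{n\times n}$ have all eigenvalues in the open unit disk and let $B\in\mathbb{R}^{n\times m}$ be known. Let $N\geq n$ and for $i=1,\dots,N$ let $x_{i,1},x_{i,2}\in\mathbb{R}^{n}$, $u_{i,1}\in\mathbb{R}^{m}$ satisfy $x_{i,2}=Ax_{i,1}+Bu_{i,1}$. Put $X_{N,1}:=(x_{1,1},\dots,x_{N,1})^{\top}$, $X_{N,2}:=(x_{1,2},\dots,x_{N,2})^{\top}$ (in $\mathbb{R}^{N\times n}$), $U_{N,1}:=(u_{1,1},\dots,u_{N,1})^{\top}\in\mathbb{R}^{N\times m}$, $Z_{B_{N,1}}:=B^{\top}X_{N,1}^{\top}$, $U_{B_{N,1}}:=U_{N,1}B^{\top}$, and let $Z_{N,2}\in\mathbb{R}^{N\times n}$ be a solution of $X_{N,2}X_{N,1}^{\top}=X_{N,1}Z_{N,2}^{\top}+U_{N,1}Z_{B_{N,1}}$. Let $\hat{A}\in\mathbb{R}^{r\times r}$, $\hat{B}\in\mathbb{R}^{r\times m}$, $\hat{C}\in\mathbb{R}^{n\times r}$, and assume: (a1) $(X_{N,1}^{\dagger}Z_{N,2},X_{N,1}^{\dagger}X_{N,1})$ is a regular matrix pencil; (a2) the spectra of $(X_{N,1}^{\dagger}Z_{N,2},X_{N,1}^{\dagger}X_{N,1})$ and $(I_r,\hat{A})$ are disjoint; (a3) $(X_{N,1}^{\dagger}(X_{N,2}-U_{B_{N,1}}),X_{N,1}^{\dagger}X_{N,1})$ is a regular matrix pencil; (a4) the spectra of $(X_{N,1}^{\dagger}(X_{N,2}-U_{B_{N,1}}),X_{N,1}^{\dagger}X_{N,1})$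 and $(I_r,\hat{A})$ are disjoint; (A2) every eigenvalue $\lambda$ of $\hat{A}$ satisfies $0<|\lambda|<1$; (b2) $\operatorname{rank}X_{N,1}=n$. Let $P,Q\in\mathbb{R}^{r\times r}$ be the solutions of $\hat{A}P\hat{A}^{\top}+\hat{B}\hat{B}^{\top}=P$ and $\hat{A}^{\top}Q\hat{A}+\hat{C}^{\top}\hat{C}=Q$. Let $R,S\in\mathbb{R}^{n\times r}$ satisfy $$X_{N,1}^{\dagger}Z_{N,2}R\hat{A}^{\top}+X_{N,1}^{\dagger}Z_{B_{N,1}}^{\top}\hat{B}^{\top}=X_{N,1}^{\dagger}X_{N,1}R,\qquad X_{N,1}^{\dagger}(X_{N,2}-U_{B_{N,1}})S\hat{A}-X_{N,1}^{\dagger}X_{N,1}\hat{C}=X_{N,1}^{\dagger}X_{N,1}S,$$ and set $S_B:=B^{\top}S$. Define $$\tilde{\nabla}_{\hat{A}}f:=2\big(Q\hat{A}P+(S^{\top}R-S_{B}^{\top}\hat{B}^{\top})(\hat{A}^{\dagger})^{\top}\big),\quad \tilde{\nabla}_{\hat{B}}f:=2(S_{B}^{\top}+Q\hat{B}),\quad \tilde{\nabla}_{\hat{C}}f:=2(\hat{C}P-R).$$ Let $R_*,S_*\in\mathbb{R}^{n\times r}$ be the solutions of $AR_*\hat{A}^{\top}+B\hat{B}^{\top}=R_*$ and $A^{\top}S_*\hat{A}-\hat{C}=S_*$. Then $$\tilde{\nabla}_{\hat{A}}f=\nabla_{\hat{A}}f=2(Q\hat{A}P+S_*^{\top}AR_*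 ),\quad \tilde{\nabla}_{\hat{B}}f=\nabla_{\hat{B}}f=2(S_*^{\top}B+Q\hat{B}),\quad \tilde{\nabla}_{\hat{C}}f=\nabla_{\hat{C}}f=2(\hat{C}P-R_* ).$$
   Context: $M^{\dagger}$ denotes the Moore–Penrose pseudoinverse. A pair $(M,K)$ of square matrices of equal size is a regular matrix pencil if $\det(M-\lambda K)$ is not identically zero in $\lambda$; its spectrum is the set of $\lambda\in\mathbb{C}$ with $\det(M-\lambda K)=0$, together with $\infty$ if $K$ is singular. The spectrum of $(I_r,\hat A)$ is the set of $\lambda\in\mathbb{C}$ with $\det(I_r-\lambda\hat A)=0$ (plus $\infty$ if $\hat A$ is singular). Background: for the system $x_{k+1}=Ax_k+Bu_k$, $y_k=x_k$ with transfer function $H(z)=(zI_n-A)^{-1}B$ and a reduced model with $H_r(z)=\hat{C}(zI_r-\hat{A})^{-1}\hat{B}$, $\hat A$ stable, $\|H-H_r\|_{h^2}^2$ equals a constant plus $f(\hat{A},\hat{B},\hat{C})=\operatorname{tr}(\hat{C}P\hat{C}^{\top})-2\operatorname{tr}(R_*\hat{C}^{\top})$, whose entrywise gradients are known (Van Dooren et al.; Bunse-Gerstner et al.) to be $2(Q\hat{A}P+S_*^{\top}AR_* )$, $2(S_*^{\top}B+Q\hat{B})$, $2(\hat{C}P-R_* )$. In this setting $B$ is known, so $Z_{B_{N,1}}$, $U_{B_{N,1}}$ and $S_B$ are computed directly from $B$. *)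

(* Real matrices over an arbitrary real closed field R
   (covers the real numbers); complex eigenvalues live in R[i] = complex R. *)
From HB Require Import structures.
From mathcomp Require Import all_boot all_order all_algebra.
From mathcomp Require Import complex.
Set Implicit Arguments. Unset Strict Implicit. Unset Printing Implicit Defensive.
Import Order.TTheory GRing.Theory Num.Theory.
Local Open Scope ring_scope.

Section Defs.
Variable R : rcfType.
Local Notation C := (R[i]).

Definition cmx m n (M : 'M[R]_(m, n)) : 'M[C]_(m, n) := map_mx (real_complex R) M.

(* Moore-Penrose pseudoinverse Md of M: the (unique) matrix satisfying the
   four Penrose conditions (real case: the adjoint is the transpose). *)
Definition is_pinv m n (M : 'M[R]_(m, n)) (Md : 'M[R]_(n, m)) : Prop :=
  [/\ M *m Md *m M = M, Md *m M *m Md = Md,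
      (M *m Md)^T = M *m Md & (Md *m M)^T = Md *m M].

Definition eigenvalue_c n (M : 'M[R]_n) (l : C) : bool :=
  root (char_poly (cmx M)) l.

Definition pencil_poly n (M K : 'M[R]_n) : {poly C} :=
  \det (map_mx polyC (cmx M) - 'X *: map_mx polyC (cmx K)).

Definition regular_pencil n (M K : 'M[R]_n) : bool := pencil_poly M K != 0.

(* spectrum of a pencil as a predicate on C extended by infinity (None) *)
Definition pencil_spectrum n (M K : 'M[R]_n) (z : option C) : bool :=
  match z with
  | Some l => root (pencil_poly M K) l
  | None => \det K == 0
  end.

Definition disjoint_spectra n p (M K : 'M[R]_n) (M' K' : 'M[R]_p) : Prop :=
  forall z : option C, ~ (pencil_spectrum M K z /\ pencil_spectrum M' K' z).
End Defs.

(* Since rank X1 = n, X1^+ is a left inverse of X1, and the data equations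
   identify the system: X1^+ Z2 = A, X1^+ ZB^T = B and X1^+ (X2 - UB) = A^T.
   The data-driven Sylvester equations for R and S then become exactly the
   Stein equations defining R_* and S_*.  A Stein equation M X N + E = X has a
   unique solution when no product of an eigenvalue of M and one of N equals 1,
   which holds here because all these eigenvalues lie in the open unit disk;
   hence R = R_* and S = S_*.  Finally S^T R - S_B^T Bh^T = S^T A R Ah^T, and
   Ah is invertible (its eigenvalues are nonzero), so multiplying by
   (Ah^+)^T = (Ah^-1)^T leaves S_*^T A R_*. *)
From HB Require Import structures.
From mathcomp Require Import all_boot all_order all_algebra.
From mathcomp Require Import complex.
Set Implicit Arguments. Unset Strict Implicit. Unset Printing Implicit Defensive.
Import Order.TTheory GRing.Theory Num.Theory.
Local Open Scope ring_scope.

Lemma char_poly_trmx (F : comNzRingType) n (M : 'M[F]_n) :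
  char_poly M^T = char_poly M.
Proof.
by rewrite /char_poly -det_tr /char_poly_mx linearB /= tr_scalar_mx map_trmx trmxK.
Qed.

Lemma row_full_ginv_mulmx (F : fieldType) m n (M : 'M[F]_(m, n)) Md :
  M *m Md *m M = M -> row_full M -> Md *m M = 1%:M.
Proof.
by move=> MMdM /row_full_inj; apply; rewrite mulmxA MMdM mulmx1.
Qed.

Lemma normr_lt1_mul_neq1 (C : numDomainType) (x y : C) :
  `|x| < 1 -> `|y| < 1 -> x * y != 1.
Proof.
move=> x_lt1 y_lt1; apply/eqP => xy1.
have := mulr_ilt1 (normr_ge0 x) (normr_ge0 y) x_lt1 y_lt1.
by rewrite -normrM xy1 normr1 ltxx.
Qed.

Section Stein.
Variable F : fieldType.

Lemma stein_mul_prod n r (M : 'M[F]_n) (N : 'M[F]_r) (D : 'M[F]_(n, r))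
    (s : seq F) :
  M *m D *m N = D ->
  \prod_(l <- s) (M - l%:M) *m D *m N ^+ size s
    = D *m \prod_(l <- s) (1 - l *: N).
Proof.
move=> MDN; elim: s => [|l s IHs]; first by rewrite !big_nil mul1mx mulmx1.
have commN t : \prod_(k <- t) (1 - k *: N) *m N = N *m \prod_(k <- t) (1 - k *: N).
  rewrite mulmxE; apply/esym/commr_prod => k _.
  by rewrite /GRing.comm mulrBl mulrBr mul1r mulr1 -!mulmxE -scalemxAl -scalemxAr.
rewrite !big_cons /= exprSr -!mulmxE -!mulmxA.
rewrite (mulmxA D) (mulmxA (\prod_(j <- s) (M - j%:M))) (mulmxA _ D) IHs.
rewrite -mulmxA commN !mulmxA; congr (_ *m _).
by rewrite !mulmxBl MDN mul_scalar_mx -scalemxAl mulmxBr mulmx1 -scalemxAr.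
Qed.

Lemma unitmx_1_subZ r (N : 'M[F]_r) l :
  (forall mu, root (char_poly N) mu -> l * mu != 1) -> 1%:M - l *: N \in unitmx.
Proof.
move=> Nl; rewrite unitmxE unitfE; apply: contraTN isT => /det0P[v v0].
rewrite mulmxBr mulmx1 -scalemxAr => /eqP; rewrite subr_eq0 => /eqP vE.
have l0 : l != 0 by apply: contraNneq v0 => l0; rewrite vE l0 scale0r.
have /Nl : root (char_poly N) l^-1.
  rewrite -eigenvalue_root_char; apply/eigenvalueP; exists v => //.
  by rewrite {2}vE scalerA mulVf // scale1r.
by rewrite mulfV // eqxx.
Qed.

End Stein.

(* By Cayley-Hamilton the split characteristic polynomial of M annihilates M,
   so by [stein_mul_prod] D times the invertible \prod (1 - l N) vanishes. *)
Lemma stein_eq0 (F : closedFieldType) n r (M : 'M[F]_n) (N : 'M[F]_r)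
    (D : 'M[F]_(n, r)) :
  (forall l mu, root (char_poly M) l -> root (char_poly N) mu -> l * mu != 1) ->
  M *m D *m N = D -> D = 0.
Proof.
case: n M D => [|n] M D MN MDN; first by rewrite flatmx0.
have [s charM] := closed_field_poly_normal (char_poly M).
rewrite (monicP (char_poly_monic M)) scale1r in charM.
have rootsM l : l \in s -> root (char_poly M) l by rewrite charM root_prod_XsubC.
have prodM0 : \prod_(l <- s) (M - l%:M) = 0.
  rewrite -(Cayley_Hamilton M) charM rmorph_prod; apply: eq_bigr => l _.
  by rewrite rmorphB /= horner_mx_X horner_mx_C.
have prodN_unit : \prod_(l <- s) (1 - l *: N) \in unitmx.
  elim: s rootsM {charM prodM0} => [|l s IHs] rootsM.
    by rewrite big_nil unitmx1.
  rewrite big_cons -mulmxE unitmx_mul unitmx_1_subZ ?IHs // => [l' sl'|mu].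
    by apply: rootsM; rewrite inE sl' orbT.
  by apply: MN; apply: rootsM; rewrite inE eqxx.
have := stein_mul_prod s MDN; rewrite prodM0 !mul0mx => /esym D0.
by rewrite -(mulmxK prodN_unit D) D0 mul0mx.
Qed.

Section RealSpectrum.
Variable R : rcfType.

Lemma eigenvalue_c_trmx n (M : 'M[R]_n) l : eigenvalue_c M^T l = eigenvalue_c M l.
Proof. by rewrite /eigenvalue_c /cmx -map_trmx char_poly_trmx. Qed.

Lemma eigenvalue_c0_unitmx n (M : 'M[R]_n) : ~~ eigenvalue_c M 0 -> M \in unitmx.
Proof.
rewrite /eigenvalue_c -eigenvalue_root_char negbK /eigenvalue /eigenspace.
by rewrite raddf0 subr0 kermx_eq0 row_free_unit map_unitmx.
Qed.

Lemma stein_uniq n r (M : 'M[R]_n) (N : 'M[R]_r) (E X Y : 'M[R]_(n, r)) :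
  (forall l mu, eigenvalue_c M l -> eigenvalue_c N mu -> l * mu != 1) ->
  M *m X *m N + E = X -> M *m Y *m N + E = Y -> X = Y.
Proof.
move=> MN XE YE; apply/eqP; rewrite -subr_eq0 -(map_mx_eq0 (real_complex R)).
apply/eqP/(stein_eq0 MN); rewrite -!map_mxM.
by rewrite mulmxBr mulmxBl -{2}XE -{2}YE opprD addrACA subrr addr0.
Qed.

End RealSpectrum.

Definition snapshots (F : Type) N n (x : 'I_N -> 'cV[F]_n) : 'M[F]_(N, n) :=
  \matrix_(i, j) x i j 0.

Lemma snapshots_dynamics (F : comNzRingType) N n m (A : 'M[F]_n)
    (B : 'M[F]_(n, m)) (x1 x2 : 'I_N -> 'cV_n) (u1 : 'I_N -> 'cV_m) :
  (forall i, x2 i = A *m x1 i + B *m u1 i) ->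
  snapshots x2 = snapshots x1 *m A^T + snapshots u1 *m B^T.
Proof.
move=> dyn; apply/matrixP => i j; rewrite !mxE dyn !mxE.
by congr (_ + _); apply: eq_bigr => k _; rewrite !mxE mulrC.
Qed.

Lemma cross_eq_solution (F : comNzRingType) N n m (X1 X2 Z2 : 'M[F]_(N, n))
    (X1d : 'M[F]_(n, N)) (U1 : 'M[F]_(N, m)) (A : 'M[F]_n) (B : 'M[F]_(n, m)) :
  X1d *m X1 = 1%:M -> X2 = X1 *m A^T + U1 *m B^T ->
  X2 *m X1^T = X1 *m Z2^T + U1 *m (B^T *m X1^T) -> Z2 = X1 *m A.
Proof.
move=> X1dX1 ->; rewrite mulmxDl -!mulmxA => /addIr /(congr1 (mulmx X1d)).
rewrite !mulmxA X1dX1 !mul1mx => /(congr1 trmx).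
by rewrite trmx_mul !trmxK => ->.
Qed.

Theorem theorem2 (R : rcfType) (n m N r : nat)
  (A : 'M[R]_n) (B : 'M[R]_(n, m))
  (x1 x2 : 'I_N -> 'cV[R]_n) (u1 : 'I_N -> 'cV[R]_m)
  (Z2 : 'M[R]_(N, n)) (X1d : 'M[R]_(n, N))
  (Ah Ahd : 'M[R]_r) (Bh : 'M[R]_(r, m)) (Ch : 'M[R]_(n, r))
  (P Q : 'M[R]_r) (Rm S Rs Ss : 'M[R]_(n, r)) :
  (forall l : R[i], eigenvalue_c A l -> `|l| < 1) ->
  (n <= N)%N ->
  (forall i, x2 i = A *m x1 i + B *m u1 i) ->
  let X1 : 'M[R]_(N, n) := \matrix_(i, j) x1 i j 0 in
  let X2 : 'M[R]_(N, n) := \matrix_(i, j) x2 i j 0 in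
  let U1 : 'M[R]_(N, m) := \matrix_(i, j) u1 i j 0 in
  let ZB : 'M[R]_(m, N) := B^T *m X1^T in
  let UB : 'M[R]_(N, n) := U1 *m B^T in
  X2 *m X1^T = X1 *m Z2^T + U1 *m ZB ->
  is_pinv X1 X1d ->
  is_pinv Ah Ahd ->
  (* (a1)-(a4) *)
  regular_pencil (X1d *m Z2) (X1d *m X1) ->
  disjoint_spectra (X1d *m Z2) (X1d *m X1) (1%:M : 'M[R]_r) Ah ->
  regular_pencil (X1d *m (X2 - UB)) (X1d *m X1) ->
  disjoint_spectra (X1d *m (X2 - UB)) (X1d *m X1) (1%:M : 'M[R]_r) Ah ->
  (* (A2) *)
  (forall l : R[i], eigenvalue_c Ah l -> 0 < `|l| < 1) ->
  (* (b2) *)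
  \rank X1 = n ->
  Ah *m P *m Ah^T + Bh *m Bh^T = P ->
  Ah^T *m Q *m Ah + Ch^T *m Ch = Q ->
  X1d *m Z2 *m Rm *m Ah^T + X1d *m ZB^T *m Bh^T = X1d *m X1 *m Rm ->
  X1d *m (X2 - UB) *m S *m Ah - X1d *m X1 *m Ch = X1d *m X1 *m S ->
  A *m Rs *m Ah^T + B *m Bh^T = Rs ->
  A^T *m Ss *m Ah - Ch = Ss ->
  let SB : 'M[R]_(m, r) := B^T *m S in
  [/\ 2%:R *: (Q *m Ah *m P + (S^T *m Rm - SB^T *m Bh^T) *m Ahd^T)
        = 2%:R *: (Q *m Ah *m P + Ss^T *m A *m Rs),
      2%:R *: (SB^T + Q *m Bh) = 2%:R *: (Ss^T *m B + Q *m Bh)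
    & 2%:R *: (Ch *m P - Rm) = 2%:R *: (Ch *m P - Rs)].
Proof.
move=> specA _ dyn X1 X2 U1 ZB UB cross [pinvX _ _ _] [pinvAh _ _ _] _ _ _ _
  specAh rankX _ _ eqR eqS eqRs eqSs SB.
have X1dX1 : X1d *m X1 = 1%:M.
  by apply: row_full_ginv_mulmx; rewrite // /row_full rankX.
have X2E : X2 = X1 *m A^T + U1 *m B^T := snapshots_dynamics dyn.
have eA : X1d *m Z2 = A.
  by rewrite (cross_eq_solution X1dX1 X2E cross) mulmxA X1dX1 mul1mx.
have eB : X1d *m ZB^T = B by rewrite trmx_mul !trmxK mulmxA X1dX1 mul1mx.
have eAT : X1d *m (X2 - UB) = A^T by rewrite X2E addrK mulmxA X1dX1 mul1mx.
rewrite eA eB X1dX1 mul1mx in eqR; rewrite eAT X1dX1 !mul1mx in eqS.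
have spec_mul l mu : eigenvalue_c A l -> eigenvalue_c Ah mu -> l * mu != 1.
  by move=> /specA lA /specAh /andP[_ muAh]; apply: normr_lt1_mul_neq1.
have eR : Rm = Rs.
  apply: (stein_uniq _ eqR eqRs) => l mu.
  by rewrite eigenvalue_c_trmx; apply: spec_mul.
have eS : S = Ss.
  apply: (stein_uniq _ eqS eqSs) => l mu.
  by rewrite eigenvalue_c_trmx; apply: spec_mul.
have AhdAh : Ahd *m Ah = 1%:M.
  apply: row_full_ginv_mulmx; rewrite // row_full_unit eigenvalue_c0_unitmx //.
  by apply/negP => /specAh; rewrite normr0 ltxx.
have SBE : (B^T *m S)^T = S^T *m B by rewrite trmx_mul trmxK.
rewrite /SB SBE -eR -eS; split => //; congr (_ *: (_ + _)).
rewrite -(mulmxA S^T B) -mulmxBr -{1}eqR addrK.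
by rewrite -!mulmxA -trmx_mul AhdAh trmx1 mulmx1.
Qed.
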